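(* Let $(\mathsf K,\mathsf D)$ be a differential ring, $a_1\in\mathsf K$, $\nabla:=\mathsf D+a_1\in\mathsf K\langle\mathsf D\rangle$, and $u\in\mathsf K$. For every $m\ge0$, $$(\nabla+u)^m=\sum_{j=0}^m\binom mj Q_{m-j}(u)\,\nabla^j$$ in $\mathsf K\langle\mathsf D\rangle$.
   Context: $(\mathsf K,\mathsf D)$: unital associative (possibly noncommutative) ring with derivation; $\mathsf K\langle\mathsf D\rangle$: Ore algebra with $\mathsf D a=a\mathsf D+\mathsf D(a)$. Define the derivation $\Delta_{a_1}(b):=\mathsf D(b)+a_1b-ba_1$ on $\mathsf K$. The covariant Bell polynomials are $Q_0(u)=1$, $Q_{m+1}(u)=\Delta_{a_1}(Q_m(u))+u\,Q_m(u)$. *)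

From mathcomp Require Import all_boot all_algebra.
Set Implicit Arguments. Unset Strict Implicit. Unset Printing Implicit Defensive.
Import GRing.Theory.
Local Open Scope ring_scope.

(* The Ore algebra K<D> over a ring K with derivation D.
   Its elements are represented by their (unique) normal form
   sum_i p_i D^i, stored as the coefficient sequence of a {poly K}
   (coefficients on the LEFT of the powers of D).  Only the additive
   structure of {poly K} is used; the multiplication of K<D> is
   [ore_mul] below, encoding the rule  D a = a D + D(a). *)

Section Ore.
Variable K : nzRingType.
Variable D : K -> K.

(* left multiplication by the generator D:
   D * (sum b_i D^i) = sum (b_i D^(i+1) + D(b_i) D^i) *)
Definition ore_lmulD (q : {poly K}) : {poly K} := 'X * q + map_poly D q.

Definition ore_mul (p q : {poly K}) : {poly K} :=
  \sum_(i < size p) (p`_i)%:P * iter i ore_lmulD q.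

Definition ore_pow (p : {poly K}) (m : nat) : {poly K} :=
  iter m (ore_mul p) 1.

Definition Delta (a1 b : K) : K := D b + a1 * b - b * a1.

Fixpoint covQ (a1 : K) (m : nat) (u : K) : K :=
  match m with
  | 0 => 1
  | m'.+1 => Delta a1 (covQ a1 m' u) + u * covQ a1 m' u
  end.
End Ore.

(* For a constant c, left multiplication by nabla + u obeys the twisted Leibniz
   rule (nabla + u)(c w) = c (nabla w) + (Delta(c) + u c) w.  Iterating it on
   w = 1, the coefficient in front of nabla^j evolves under c |-> Delta(c) + u c
   starting from 1, which is the recursion defining the Q_k, and the binomial
   coefficients come from Pascal's rule exactly as in the binomial theorem. *)

From mathcomp Require Import all_boot all_algebra.
Import GRing.Theory.
Local Open Scope ring_scope.

Lemma sum_binomial_pascal (V : nmodType) (m : nat) (F : nat -> nat -> V) :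
  \sum_(j < m.+2) F (m.+1 - j)%N j *+ 'C(m.+1, j) =
  \sum_(j < m.+1) F (m - j)%N j.+1 *+ 'C(m, j) +
  \sum_(j < m.+1) F (m.+1 - j)%N j *+ 'C(m, j).
Proof.
rewrite big_ord_recl.
under eq_bigr do rewrite lift0 subSS binS mulrnDr addrC.
rewrite big_split /= addrCA; congr (_ + _).
rewrite [RHS]big_ord_recl [X in _ + X = _]big_ord_recr /=.
by rewrite (@bin_small m m.+1) // mulr0n addr0 !bin0.
Qed.

Section TwistedBinomial.
Variables (R : nzRingType) (V : lmodType R) (M N : V -> V) (s : R -> R).
Hypothesis M_add : {morph M : x y / x + y}.
Hypothesis M_twist : forall (c : R) (v : V), M (c *: v) = c *: N v + s c *: v.

Let M0 : M 0 = 0.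
Proof. by apply: (addrI (M 0)); rewrite -M_add !addr0. Qed.

Let M_mulrn (v : V) (n : nat) : M (v *+ n) = M v *+ n.
Proof. by elim: n => [|n IHn]; rewrite ?M0 // !mulrS M_add IHn. Qed.

Lemma iter_twisted_binomial (m : nat) (v : V) :
  iter m M v =
  \sum_(j < m.+1) (iter (m - j) s 1 *: iter j N v) *+ 'C(m, j).
Proof.
elim: m => [|m IHm]; first by rewrite big_ord1 scale1r.
rewrite iterS IHm (big_morph M M_add M0).
rewrite (sum_binomial_pascal _ _ (fun k j => iter k s 1 *: iter j N v)) -big_split.
apply: eq_bigr => j _.
by rewrite M_mulrn M_twist (@subSn j m (ltn_ord j)) mulrnDl.
Qed.

End TwistedBinomial.

Section OreAlgebra.
Variables (K : nzRingType) (D : K -> K).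
Hypothesis D_add : forall a b : K, D (a + b) = D a + D b.
Hypothesis D_mul : forall a b : K, D (a * b) = D a * b + a * D b.

Let D0 : D 0 = 0.
Proof. by apply: (addrI (D 0)); rewrite -D_add !addr0. Qed.

Lemma map_poly_derD (p q : {poly K}) :
  map_poly D (p + q) = map_poly D p + map_poly D q.
Proof. by apply/polyP => i; rewrite coefD !coef_map_id0 // coefD D_add. Qed.

Lemma map_poly_derZ (c : K) (q : {poly K}) :
  map_poly D (c *: q) = c *: map_poly D q + D c *: q.
Proof.
apply/polyP => i.
by rewrite coefD !coefZ !coef_map_id0 // coefZ D_mul addrC.
Qed.

Lemma ore_lmulD_add : {morph ore_lmulD D : p q / p + q}.
Proof. by move=> p q; rewrite /ore_lmulD mulrDr map_poly_derD addrACA. Qed.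

Lemma ore_lmulDZ (c : K) (q : {poly K}) :
  ore_lmulD D (c *: q) = c *: ore_lmulD D q + D c *: q.
Proof.
rewrite /ore_lmulD map_poly_derZ scalerDr addrA; congr (_ + _ + _).
by rewrite -!mul_polyC mulrA -commr_polyX mulrA.
Qed.

Definition ore_lmulDC (c : K) (q : {poly K}) : {poly K} :=
  ore_lmulD D q + c *: q.

Lemma ore_lmulDC_add (c : K) : {morph ore_lmulDC c : p q / p + q}.
Proof. by move=> p q; rewrite /ore_lmulDC ore_lmulD_add scalerDr addrACA. Qed.

Lemma ore_lmulDCZ (a c : K) (q : {poly K}) :
  ore_lmulDC a (c *: q) = c *: ore_lmulDC a q + Delta D a c *: q.
Proof.
rewrite /ore_lmulDC ore_lmulDZ; move: (ore_lmulD D q) => Lq.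
rewrite /Delta scalerDr !scalerA !scalerDl scaleNr -!addrA.
by congr (_ + _); rewrite [RHS]addrCA subrKC.
Qed.

Lemma ore_lmulDC_addZ (a u c : K) (q : {poly K}) :
  ore_lmulDC (a + u) (c *: q) = c *: ore_lmulDC a q + (Delta D a c + u * c) *: q.
Proof.
rewrite {1}/ore_lmulDC scalerDl addrA -/(ore_lmulDC a _) ore_lmulDCZ.
by rewrite scalerA -addrA -scalerDl.
Qed.

Lemma ore_mulC (c : K) (q : {poly K}) : ore_mul D c%:P q = c *: q.
Proof.
rewrite /ore_mul size_polyC; case: eqP => [->|_].
  by rewrite big_ord0 scale0r.
by rewrite big_ord1 coefC mul_polyC.
Qed.

Lemma ore_mul_XaddC (c : K) : ore_mul D ('X + c%:P) =1 ore_lmulDC c.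
Proof.
move=> q; rewrite /ore_mul size_XaddC !big_ord_recr big_ord0 /= add0r.
by rewrite !coefD !coefX !coefC /= add0r addr0 mul1r mul_polyC addrC.
Qed.

Lemma ore_pow_XaddC (c : K) (m : nat) :
  ore_pow D ('X + c%:P) m = iter m (ore_lmulDC c) 1.
Proof. exact: eq_iter (ore_mul_XaddC c) m 1. Qed.

End OreAlgebra.

Lemma covQE (K : nzRingType) (D : K -> K) (a1 u : K) (m : nat) :
  covQ D a1 m u = iter m (fun c => Delta D a1 c + u * c) 1.
Proof. by elim: m => //= m ->. Qed.

Theorem mainTheorem5 (K : nzRingType) (D : K -> K)
  (D_add : forall a b : K, D (a + b) = D a + D b)
  (D_mul : forall a b : K, D (a * b) = D a * b + a * D b)
  (a1 u : K) (m : nat) :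
  let nabla : {poly K} := 'X + a1%:P in
  ore_pow D (nabla + u%:P) m =
  \sum_(j < m.+1)
     ore_mul D (covQ D a1 (m - j) u)%:P (ore_pow D nabla j) *+ 'C(m, j).
Proof.
move=> nabla; rewrite /nabla -addrA -polyCD ore_pow_XaddC.
under eq_bigr do rewrite ore_mulC ore_pow_XaddC covQE.
apply: iter_twisted_binomial => [|c q].
- exact: ore_lmulDC_add.
- exact: ore_lmulDC_addZ.
Qed.
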